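(* Let $f:\mathbb{R}^p\times\mathbb{R}^n\to\mathbb{R}^n$, written $f(a,x)$ with parameters $a\in\mathbb{R}^p$ and variables $x\in\mathbb{R}^n$, be such that for every $a$ the map $f(a,\cdot)$ is differentiable (on an open set containing the box $[x]$ below), with Jacobian $\frac{\partial f}{\partial x}(a,x)$ with respect to $x$. Let $[x],[y],[z]\in\mathbb{IR}^n$, $[a]\in\mathbb{IR}^p$, $\tilde x\in[x]$ and $[X]\in\mathbb{IR}^{n\times n}$ satisfy: (i) $[x]\subseteq[z]$; (ii) $\{f(a,\tilde x): a\in[a]\}\subseteq[y]$; (iii) $\{\frac{\partial f}{\partial x}(a,x): a\in[a],\ x\in[x]\}\subseteq[X]$ (entrywise inclusion). Define the (parametric) Hansen–Sengupta image $$[x'] := \tilde x+\Gamma\bigl([X],\,-[y],\,[x]-\tilde x,\,[z]-\tilde x\bigr).$$ Then: (1) for every $a\in[a]$ and every $x\in[x]$ with $f(a,x)=0$, one has $x\in[x']$; (2) if $[x']\neq\emptyset$ and $[x']\subseteq\operatorname{int}[x]$, then for every $a\in[a]$ the map $f(a,\cdot)$ has a unique zero in $[x']$.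
   Context: $\mathbb{IR}^n$ denotes the set of closed interval vectors (boxes) of dimension $n$ and $\mathbb{IR}^{n\times n}$ the set of $n\times n$ interval matrices; sums and products of intervals are those of (extended) interval arithmetic, and subtracting a real vector from an interval vector is done componentwise. For a set $S\subseteq\mathbb{R}$, $\Box S$ denotes its interval hull (smallest closed interval containing $S$, possibly unbounded; $\Box\emptyset=\emptyset$). One-dimensional Gauss–Seidel: for intervals $[\alpha],[\beta],[\xi]$, $$\gamma([\alpha],[\beta],[\xi]):=\Box\{x\in[\xi]:\ \exists \alpha\in[\alpha],\ \exists\beta\in[\beta],\ \alpha x=\beta\}$$ (when $0\notin[\alpha]$ this equals $([\beta]/[\alpha])\cap[\xi]$). Multidimensional interval Gauss–Seidel: for $[A]\in\mathbb{IR}^{n\times n}$ with entries $[A_{ij}]$, and $[b],[u],[w]\in\mathbb{IR}^n$, $\Gamma([A],[b],[u],[w]):=[u']$ where the components are computed successively for $i=1,\dots,n$ by $$[u'_i]:=\gamma\Bigl([A_{ii}],\ [b_i]-\sum_{j<i}[A_{ij}][u'_j]-\sum_{j>i}[A_{ij}][u_j],\ [w_i]\Bigr).$$ If some component is empty, $[u']$ is the empty set. *)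

From mathcomp Require Import all_boot.
From Stdlib Require Import Reals.
Set Implicit Arguments. Unset Strict Implicit. Unset Printing Implicit Defensive.
Open Scope R_scope.

Definition vec (n : nat) := 'I_n -> R.

Definition rsum {I : Type} (l : seq I) (F : I -> R) : R :=
  foldr (fun j acc => F j + acc) 0 l.
Definition vnorm {n : nat} (h : vec n) : R :=
  foldr (fun j acc => Rmax (Rabs (h j)) acc) 0 (enum 'I_n).

Definition vadd {n : nat} (x y : vec n) : vec n := fun i => x i + y i.
Definition vsub {n : nat} (x y : vec n) : vec n := fun i => x i - y i.

Definition is_open {n : nat} (U : vec n -> Prop) : Prop :=
  forall x, U x -> exists r, 0 < r /\ forall y, vnorm (vsub y x) < r -> U y.

Definition has_jacobian {n : nat} (g : vec n -> vec n)
    (Jx : 'I_n -> 'I_n -> R) (x : vec n) : Prop :=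
  forall eps, 0 < eps -> exists delta, 0 < delta /\
    forall h : vec n, vnorm h < delta ->
      forall i, Rabs (g (vadd x h) i - g x i - rsum (enum 'I_n) (fun j => Jx i j * h j))
                <= eps * vnorm h.

(** Closed bounded intervals [lo, hi] (elements of IR), given by their
    endpoints; well-formedness lo <= hi is a separate predicate. *)
Definition interval := (R * R)%type.
Definition ival (I : interval) : R -> Prop := fun x => fst I <= x <= snd I.
Definition iwf (I : interval) : Prop := fst I <= snd I.

Definition in_box {n : nat} (B : 'I_n -> interval) (x : vec n) : Prop :=
  forall i, ival (B i) (x i).
Definition in_int_box {n : nat} (B : 'I_n -> interval) (x : vec n) : Prop :=
  forall i, fst (B i) < x i < snd (B i).

(** Interval arithmetic, given set-theoretically (all intervals occurring are
    closed and bounded, where this coincides with interval arithmetic). *)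
Definition iset := R -> Prop.
Definition sadd (A B : iset) : iset := fun z => exists x y, A x /\ B y /\ z = x + y.
Definition ssub (A B : iset) : iset := fun z => exists x y, A x /\ B y /\ z = x - y.
Definition smul (A B : iset) : iset := fun z => exists x y, A x /\ B y /\ z = x * y.
Definition sopp (A : iset) : iset := fun z => exists x, A x /\ z = - x.
Definition sshift (A : iset) (c : R) : iset := fun z => exists x, A x /\ z = x - c.
Definition ssum {I : Type} (l : seq I) (F : I -> iset) : iset :=
  foldr (fun j acc => sadd (F j) acc) (fun z => z = 0) l.

(** Interval hull: the smallest closed (possibly unbounded) interval
    containing S; empty for S empty. *)
Definition hull (S : iset) : iset := fun x =>
  (exists s, S s) /\
  (forall u, (forall s, S s -> s <= u) -> x <= u) /\
  (forall l, (forall s, S s -> l <= s) -> l <= x).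

Definition gam (Al Be Xi : iset) : iset :=
  hull (fun x => Xi x /\ exists al be, Al al /\ Be be /\ al * x = be).

(** Multidimensional interval Gauss-Seidel: step k computes component k
    (the others being kept from the previous step). *)
Fixpoint gs_aux {n : nat} (A : 'I_n -> 'I_n -> iset) (b u w : 'I_n -> iset)
    (k : nat) : 'I_n -> iset :=
  match k with
  | O => u
  | S k' =>
      let prev := gs_aux A b u w k' in
      fun i =>
        if Nat.eqb (nat_of_ord i) k' then
          gam (A i i)
              (ssub (ssub (b i)
                   (ssum [seq j <- enum 'I_n | Nat.ltb (nat_of_ord j) (nat_of_ord i)] (fun j => smul (A i j) (prev j))))
                   (ssum [seq j <- enum 'I_n | Nat.ltb (nat_of_ord i) (nat_of_ord j)] (fun j => smul (A i j) (u j))))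
              (w i)
        else prev i
  end.

Definition Gamma {n : nat} (A : 'I_n -> 'I_n -> iset) (b u w : 'I_n -> iset)
  : 'I_n -> iset := gs_aux A b u w n.

(** The parametric Hansen-Sengupta image
    [x'] = xt + Gamma([X], -[y], [x] - xt, [z] - xt), as a predicate on R^n
    (it is empty as soon as one component is empty). *)
Definition HS_image {n : nat} (X : 'I_n -> 'I_n -> interval)
    (y x z : 'I_n -> interval) (xt : vec n) : vec n -> Prop :=
  fun v => forall i,
    exists g, Gamma (fun i j => ival (X i j))
                    (fun i => sopp (ival (y i)))
                    (fun i => sshift (ival (x i)) (xt i))
                    (fun i => sshift (ival (z i)) (xt i)) i g
              /\ v i = xt i + g.

(** Write [G] for the shifted image [Gamma([X], -[y], [x] - xt, [z] - xt)],
    so that [[x'] = xt + G], and fix a parameter [a]; by the mean value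
    theorem, [[X]] encloses the slopes of [g := f(a,.)] between any two
    points of [[x]].

    Part (1): for a zero [x] of [g], the slope relation between [xt] and [x]
    is a real linear system with coefficients in [[X]], right-hand side
    [- g(xt)] in [- [y]], and solution [x - xt]; Gauss-Seidel is sound, so
    [x - xt] lies in [G].

    Part (2): if [G] is nonempty and interior to [[x] - xt], then
    - each diagonal interval [[X]_ii] is regular (does not contain 0), and
      each row equation has all its solutions interior to [[x]_i - xt_i];
    - comparing extreme solutions of successive rows yields widths [D]
      satisfying a Gauss-Seidel balance with [D < width [x]], whence the
      comparison matrix of [[X]] has a positive dominance vector [v]
      (an H-matrix criterion);
    - the projected Newton-like map [x |-> clip(x - g(x) / (sgn [X]_ii K))]
      is then a contraction of [[x]] for the [v]-weighted maximum norm, so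
      it has a unique fixed point (Banach); its fixed points are exactly the
      zeros of [g] in [[x]], and they lie in [xt + G]. *)

From mathcomp Require Import all_boot.
From Stdlib Require Import Reals Lra Lia FunctionalExtensionality IndefiniteDescription.
Open Scope R_scope.

Lemma rsum_cons {I : Type} (j : I) (l : seq I) (F : I -> R) :
  rsum (j :: l) F = F j + rsum l F.
Proof. by []. Qed.

Lemma rsum_ext {I : eqType} (l : seq I) (F G : I -> R) :
  (forall j, j \in l -> F j = G j) -> rsum l F = rsum l G.
Proof.
elim: l => [|j l IH] FG //; rewrite !rsum_cons FG ?mem_head // IH // => k Hk.
by apply: FG; rewrite in_cons Hk orbT.
Qed.

Lemma rsum_plus {I : Type} (l : seq I) (F G : I -> R) :
  rsum l (fun j => F j + G j) = rsum l F + rsum l G.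
Proof. elim: l => [|j l IH]; rewrite ?rsum_cons ?IH /rsum /=; lra. Qed.

Lemma rsum_minus {I : Type} (l : seq I) (F G : I -> R) :
  rsum l (fun j => F j - G j) = rsum l F - rsum l G.
Proof. elim: l => [|j l IH]; rewrite ?rsum_cons ?IH /rsum /=; lra. Qed.

Lemma rsum_scal {I : Type} (l : seq I) (c : R) (F : I -> R) :
  rsum l (fun j => c * F j) = c * rsum l F.
Proof. elim: l => [|j l IH]; rewrite ?rsum_cons ?IH /rsum /=; lra. Qed.

Lemma rsum_le {I : eqType} (l : seq I) (F G : I -> R) :
  (forall j, j \in l -> F j <= G j) -> rsum l F <= rsum l G.
Proof.
elim: l => [|j l IH] FG; first by rewrite /rsum /=; lra.
have Hj := FG j (mem_head _ _).
have Hl : rsum l F <= rsum l G by apply: IH => k Hk; apply: FG; rewrite in_cons Hk orbT.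
rewrite !rsum_cons; lra.
Qed.

Lemma rsum_nonneg {I : eqType} (l : seq I) (F : I -> R) :
  (forall j, j \in l -> 0 <= F j) -> 0 <= rsum l F.
Proof.
move=> F0; have := rsum_le l (fun=> 0) F F0.
suff -> : rsum l (fun=> 0) = 0 by [].
by elim: l {F0} => [|j l IH] //; rewrite rsum_cons IH Rplus_0_r.
Qed.

Lemma rsum_abs {I : Type} (l : seq I) (F : I -> R) :
  Rabs (rsum l F) <= rsum l (fun j => Rabs (F j)).
Proof.
elim: l => [|j l IH]; first by rewrite /rsum /= Rabs_R0; lra.
have := Rabs_triang (F j) (rsum l F); rewrite !rsum_cons; lra.
Qed.

Definition idx_lt {n : nat} (i : 'I_n) : seq 'I_n :=
  [seq j <- enum 'I_n | Nat.ltb (nat_of_ord j) (nat_of_ord i)].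
Definition idx_gt {n : nat} (i : 'I_n) : seq 'I_n :=
  [seq j <- enum 'I_n | Nat.ltb (nat_of_ord i) (nat_of_ord j)].

Lemma mem_idx_lt {n : nat} (i j : 'I_n) : j \in idx_lt i -> (j < i)%coq_nat.
Proof. by rewrite mem_filter => /andP [/Nat.ltb_lt]. Qed.

Lemma rsum_split_at {n : nat} (i : 'I_n) (l : seq 'I_n) (F : 'I_n -> R) :
  rsum l F = rsum [seq j <- l | Nat.ltb (nat_of_ord j) (nat_of_ord i)] F
             + rsum [seq j <- l | j == i] F
             + rsum [seq j <- l | Nat.ltb (nat_of_ord i) (nat_of_ord j)] F.
Proof.
elim: l => [|j l IH]; first by rewrite /rsum /=; lra.
rewrite rsum_cons {1}IH /=.
case: (Nat.ltb_spec j i) => ji; last case: (Nat.ltb_spec i j) => ij.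
- have -> : (j == i) = false by apply/eqP => E; subst; lia.
  have -> : Nat.ltb i j = false by apply Nat.ltb_ge; lia.
  rewrite rsum_cons; lra.
- have -> : (j == i) = false by apply/eqP => E; subst; lia.
  rewrite rsum_cons; lra.
- have -> : (j == i) = true by apply/eqP; apply: val_inj => /=; lia.
  rewrite rsum_cons; lra.
Qed.

Lemma rsum_split {n : nat} (i : 'I_n) (F : 'I_n -> R) :
  rsum (enum 'I_n) F = rsum (idx_lt i) F + F i + rsum (idx_gt i) F.
Proof.
rewrite {1}(rsum_split_at i (enum 'I_n) F) /idx_lt /idx_gt.
have -> : [seq j <- enum 'I_n | j == i] = [:: i].
  exact: (filter_pred1_uniq (enum_uniq _) (mem_enum _ i)).
rewrite rsum_cons /rsum /=; lra.
Qed.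

Lemma rsum_prod_bound {I : eqType} (l : seq I) (a d M V : I -> R) :
  (forall j, Rabs (a j) <= M j) -> (forall j, Rabs (d j) <= V j) ->
  Rabs (rsum l (fun j => a j * d j)) <= rsum l (fun j => M j * V j).
Proof.
move=> aM dV; apply: Rle_trans (rsum_abs _ _) _; apply: rsum_le => j _.
rewrite Rabs_mult; apply: Rmult_le_compat => //; apply: Rabs_pos.
Qed.

Lemma ssum_in {I : eqType} (l : seq I) (F : I -> iset) (g : I -> R) :
  (forall j, j \in l -> F j (g j)) -> ssum l F (rsum l g).
Proof.
elim: l => [|j l IH] Fg //=.
exists (g j), (rsum l g); split; first exact/Fg/mem_head.
split=> //; apply: IH => k Hk; apply: Fg; by rewrite in_cons Hk orbT.
Qed.

Lemma ssum_ext {I : eqType} (l : seq I) (F G : I -> iset) :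
  (forall j, j \in l -> F j = G j) -> ssum l F = ssum l G.
Proof.
elim: l => [|j l IH] FG //=; rewrite FG ?mem_head // IH // => k Hk.
by apply: FG; rewrite in_cons Hk orbT.
Qed.

(** Convex subsets of R (intervals, possibly unbounded or empty).  All sets
    built by the Gauss-Seidel operator from closed intervals are convex. *)
Definition conv (S : iset) : Prop :=
  forall u v z, S u -> S v -> u <= z <= v -> S z.

Lemma conv_between {S : iset} {u v z : R} :
  conv S -> S u -> S v -> (u <= z <= v \/ v <= z <= u) -> S z.
Proof. move=> C Su Sv [uzv|vzu]; [exact: (C u v) | exact: (C v u)]. Qed.

Lemma conv_ival (I : interval) : conv (ival I).
Proof. move=> u v z; rewrite /ival; lra. Qed.

Lemma conv_hull (S : iset) : conv (hull S).
Proof.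
move=> u v z [ne [uU uL]] [_ [vU vL]] uzv; split=> //; split.
- move=> w Hw; have := vU w Hw; lra.
- move=> w Hw; have := uL w Hw; lra.
Qed.

Lemma conv_sopp (A : iset) : conv A -> conv (sopp A).
Proof.
move=> C u v z [x [Ax ->]] [y [Ay ->]] uzv.
exists (- z); split; last lra; apply: (C y x) => //; lra.
Qed.

Lemma conv_sshift (A : iset) (c : R) : conv A -> conv (sshift A c).
Proof.
move=> C u v z [x [Ax ->]] [y [Ay ->]] uzv.
exists (z + c); split; last lra; apply: (C x y) => //; lra.
Qed.

Lemma conv_sadd (A B : iset) : conv A -> conv B -> conv (sadd A B).
Proof.
move=> CA CB u v z [x1 [y1 [A1 [B1 ->]]]] [x2 [y2 [A2 [B2 ->]]]] uzv.
case: (Rle_dec z (x2 + y1)) => Hz.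
- exists (z - y1), y1; split; [apply: (CA x1 x2) => //; lra | split=> //; lra].
- exists x2, (z - x2); split=> //; split; [apply: (CB y1 y2) => //; lra | lra].
Qed.

Lemma conv_ssub (A B : iset) : conv A -> conv B -> conv (ssub A B).
Proof.
move=> CA CB u v z [x1 [y1 [A1 [B1 ->]]]] [x2 [y2 [A2 [B2 ->]]]] uzv.
case: (Rle_dec z (x2 - y1)) => Hz.
- exists (z + y1), y1; split; [apply: (CA x1 x2) => //; lra | split=> //; lra].
- exists x2, (x2 - z); split=> //; split; [apply: (CB y2 y1) => //; lra | lra].
Qed.

(** The product of two intervals is an interval: move one factor at a time. *)
Lemma conv_smul (A B : iset) : conv A -> conv B -> conv (smul A B).
Proof.
move=> CA CB u v z [a1 [b1 [A1 [B1 ->]]]] [a2 [b2 [A2 [B2 ->]]]] uzv.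
case: (Rle_dec z (a2 * b1)) => Hz.
- case: (Req_dec b1 0) => [b10|b1n0].
    by exists a1, b1; do 2!split=> //; subst b1; nra.
  exists (z / b1), b1; split; last by split=> //; field.
  have E : z / b1 * b1 = z by field.
  apply: (conv_between CA A1 A2).
  case: (Rlt_le_dec 0 b1) => b1p; [left|right]; split; nra.
- case: (Req_dec a2 0) => [a20|a2n0].
    by exists a2, b2; do 2!split=> //; subst a2; nra.
  exists a2, (z / a2); split=> //; split; last by field.
  have E : a2 * (z / a2) = z by field.
  apply: (conv_between CB B1 B2).
  case: (Rlt_le_dec 0 a2) => a2p; [left|right]; split; nra.
Qed.

Lemma conv_ssum {I : Type} (l : seq I) (F : I -> iset) :
  (forall j, conv (F j)) -> conv (ssum l F).
Proof.
move=> C; elim: l => [|j l IH] /=; last exact: conv_sadd.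
move=> u v z -> ->; lra.
Qed.

Lemma hull_in (S : iset) (x : R) : S x -> hull S x.
Proof. by move=> Sx; split; [exists x | split; auto]. Qed.

Lemma gam_in {A B W : iset} {x : R} (al be : R) :
  W x -> A al -> B be -> al * x = be -> gam A B W x.
Proof. by move=> Wx Aal Bbe E; apply: hull_in; split=> //; exists al, be. Qed.

(** * The interval Gauss-Seidel operator *)

Section GaussSeidel.
Context {n : nat}.
Variables (A : 'I_n -> 'I_n -> iset) (b u w : 'I_n -> iset).

Definition gs_rhs (prev : 'I_n -> iset) (i : 'I_n) : iset :=
  ssub (ssub (b i) (ssum (idx_lt i) (fun j => smul (A i j) (prev j))))
       (ssum (idx_gt i) (fun j => smul (A i j) (u j))).

Lemma gs_aux_final {k : nat} {i : 'I_n} :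
  (i < k)%coq_nat -> gs_aux A b u w k i = gs_aux A b u w (S i) i.
Proof.
elim: k => [|k IH] ik; first lia.
case: (Nat.eq_dec i k) => [<- //|ink] /=.
by rewrite (proj2 (Nat.eqb_neq _ _) ink) IH //; lia.
Qed.

Lemma GammaE (i : 'I_n) :
  Gamma A b u w i = gam (A i i) (gs_rhs (Gamma A b u w) i) (w i).
Proof.
rewrite /Gamma (gs_aux_final (ltP (ltn_ord i))) /= Nat.eqb_refl /gs_rhs.
do 3 f_equal; apply: ssum_ext => j /mem_idx_lt ji.
by rewrite (gs_aux_final ji) (gs_aux_final (ltP (ltn_ord j))).
Qed.

Lemma Gamma_contains (d : vec n) (a : 'I_n -> 'I_n -> R) (bb : vec n) :
  (forall i, u i (d i)) -> (forall i, w i (d i)) ->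
  (forall i j, A i j (a i j)) -> (forall i, b i (bb i)) ->
  (forall i, a i i * d i = bb i - rsum (idx_lt i) (fun j => a i j * d j)
                               - rsum (idx_gt i) (fun j => a i j * d j)) ->
  forall i, Gamma A b u w i (d i).
Proof.
move=> ud wd Aa bbb row.
suff all_steps : forall k i, gs_aux A b u w k i (d i) by move=> i; exact: all_steps.
elim=> [|k IH] i //=.
case: (Nat.eqb_spec i k) => _ //.
set lower := rsum (idx_lt i) (fun j => a i j * d j).
set upper := rsum (idx_gt i) (fun j => a i j * d j).
apply: (gam_in (a i i) (bb i - lower - upper) (wd i) (Aa i i) _ (row i)).
exists (bb i - lower), upper; split; last split=> //.
- exists (bb i), lower; split; [exact: bbb | split=> //].
  apply: ssum_in => j _; exists (a i j), (d j).
  by split; [exact: Aa | split; [exact: IH | ]].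
- apply: ssum_in => j _; exists (a i j), (d j); by split; [exact: Aa | split].
Qed.
End GaussSeidel.

(** * A mean value theorem for maps R^n -> R^n *)

Lemma vnorm_nonneg {n : nat} (e : vec n) : 0 <= vnorm e.
Proof.
rewrite /vnorm; elim: (enum 'I_n) => [|j l IH] /=; first lra.
exact: Rle_trans IH (Rmax_r _ _).
Qed.

Lemma vnorm_scale {n : nat} (h : R) (e : vec n) :
  vnorm (fun j => h * e j) = Rabs h * vnorm e.
Proof.
rewrite /vnorm; elim: (enum 'I_n) => [|j l IH] /=; first lra.
by rewrite IH Rabs_mult RmaxRmult //; apply: Rabs_pos.
Qed.

Lemma derivable_along_line {n : nat} (g : vec n -> vec n)
    (Jx : 'I_n -> 'I_n -> R) (x e : vec n) (t : R) (i : 'I_n) :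
  has_jacobian g Jx (fun j => x j + t * e j) ->
  derivable_pt_lim (fun s => g (fun j => x j + s * e j) i) t
                   (rsum (enum 'I_n) (fun j => Jx i j * e j)).
Proof.
move=> HJ eps eps_pos.
set N := vnorm e; have N0 : 0 <= N := vnorm_nonneg e.
have [d0 [d0_pos close]] := HJ (eps / (N + 1)) ltac:(apply: Rdiv_lt_0_compat; lra).
have delta_pos : 0 < d0 / (N + 1) by apply: Rdiv_lt_0_compat; lra.
exists (mkposreal _ delta_pos) => h h0 /= small_h.
have h_pos : 0 < Rabs h by apply: Rabs_pos_lt.
have step : (fun j => x j + (t + h) * e j) = vadd (fun j => x j + t * e j) (fun j => h * e j).
  by apply: functional_extensionality => j; rewrite /vadd; ring.
have small_step : vnorm (fun j => h * e j) < d0.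
  rewrite vnorm_scale -/N.
  have : Rabs h * (N + 1) < d0.
    by apply: (Rmult_lt_reg_r (/ (N + 1))); [apply: Rinv_0_lt_compat; lra | field_simplify; lra].
  nra.
have := close _ small_step i.
rewrite step vnorm_scale -/N.
have -> : rsum (enum 'I_n) (fun j => Jx i j * (h * e j))
          = h * rsum (enum 'I_n) (fun j => Jx i j * e j).
  by rewrite -rsum_scal; apply: rsum_ext => j _; ring.
set D := g _ i - g _ i; set l := rsum _ _ => bound.
have -> : D / h - l = (D - h * l) / h by field.
rewrite /Rdiv Rabs_mult Rabs_inv.
apply: (Rmult_lt_reg_r (Rabs h)) => //.
have -> : Rabs (D - h * l) * / Rabs h * Rabs h = Rabs (D - h * l) by field; lra.
have : eps / (N + 1) * (Rabs h * N) < eps * Rabs h.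
  apply: (Rmult_lt_reg_r (N + 1)); first lra.
  have -> : eps / (N + 1) * (Rabs h * N) * (N + 1) = eps * Rabs h * N by field; lra.
  nra.
lra.
Qed.

Lemma mean_value_row {n : nat} (g : vec n -> vec n)
    (Jg : vec n -> 'I_n -> 'I_n -> R) (P : vec n -> Prop) :
  (forall p, P p -> has_jacobian g (Jg p) p) ->
  forall x y : vec n, (forall t, 0 <= t <= 1 -> P (fun j => x j + t * (y j - x j))) ->
  forall i, exists c, 0 < c < 1 /\ g y i - g x i =
    rsum (enum 'I_n) (fun j => Jg (fun k => x k + c * (y k - x k)) i j * (y j - x j)).
Proof.
move=> HJ x y segment i.
set e := fun j => y j - x j.
have [c [Ec c01]] := MVT_cor2 (fun s => g (fun j => x j + s * e j) i)
   (fun s => rsum (enum 'I_n) (fun j => Jg (fun k => x k + s * e k) i j * e j))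
   0 1 Rlt_0_1 (fun s s01 => derivable_along_line _ _ _ _ _ i (HJ _ (segment s s01))).
exists c; split=> //.
have at1 : (fun j => x j + 1 * e j) = y.
  by apply: functional_extensionality => j; rewrite /e; ring.
have at0 : (fun j => x j + 0 * e j) = x.
  by apply: functional_extensionality => j; rewrite /e; ring.
rewrite at1 at0 in Ec; rewrite Ec /e; ring.
Qed.

Lemma box_segment {n : nat} (B : 'I_n -> interval) (x z : vec n) :
  in_box B x -> in_box B z ->
  forall t, 0 <= t <= 1 -> in_box B (fun j => x j + t * (z j - x j)).
Proof. by move=> Bx Bz t t01 j; have := Bx j; have := Bz j; rewrite /ival => ? ?; split; nra. Qed.

Lemma slope_of_jacobian {n : nat} (g : vec n -> vec n) (Jg : vec n -> 'I_n -> 'I_n -> R)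
    (B : 'I_n -> interval) (X : 'I_n -> 'I_n -> interval) :
  (forall p, in_box B p -> has_jacobian g (Jg p) p) ->
  (forall p, in_box B p -> forall i j, ival (X i j) (Jg p i j)) ->
  forall x z, in_box B x -> in_box B z -> forall i,
    exists a : 'I_n -> R, (forall j, ival (X i j) (a j)) /\
      g z i - g x i = rsum (enum 'I_n) (fun j => a j * (z j - x j)).
Proof.
move=> HJ JX x z Bx Bz i.
have [c [c01 E]] := mean_value_row _ _ _ HJ x z (box_segment _ _ _ Bx Bz) i.
exists (Jg (fun k => x k + c * (z k - x k)) i); split=> //.
by apply: JX; apply: box_segment => //; lra.
Qed.

Definition sol (A B : iset) : iset :=
  fun t => exists al be, A al /\ B be /\ al * t = be.

Lemma conv_sol {A B : iset} :
  conv A -> conv B -> (forall a1 a2, A a1 -> A a2 -> 0 < a1 * a2) -> conv (sol A B).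
Proof.
move=> CA CB same_sign u v z [a1 [b1 [A1 [B1 E1]]]] [a2 [b2 [A2 [B2 E2]]]] uzv.
have := same_sign _ _ A1 A2; have := same_sign _ _ A1 A1; have := same_sign _ _ A2 A2.
move=> P22 P11 P12.
set t := b1 / a2; have Et : t * a2 = b1 by rewrite /t; field; nra.
case: (Rle_dec z t) => [zt|tz]; last first.
  (* move the right-hand side from b1 towards b2, keeping a2 *)
  exists a2, (a2 * z); do 2!split=> //.
  apply: (conv_between CB B1 B2).
  by case: (Rlt_le_dec 0 a2) => a2p; [left|right]; split; nra.
case: (Req_dec b1 0) => [b10|b1n0].
  (* then u = t = 0, hence z = 0 solves a1 * z = b1 *)
  exists a1, b1; do 2!split=> //; rewrite b10 in E1 Et *.
  have u0 : u = 0 by case: (Rmult_integral _ _ E1) => //; nra.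
  have t0 : t = 0 by case: (Rmult_integral _ _ Et) => //; nra.
  have -> : z = 0 by lra.
  ring.
(* otherwise move the coefficient from a1 towards a2, keeping b1 *)
have zn0 : z <> 0.
  (* u and t have the sign of b1 / a1, resp. b1 / a2, which agree *)
  have ut : (a1 * a2) * (u * t) = b1 * b1 by rewrite -{1}E1 -Et; ring.
  have b1sq : 0 < b1 * b1 by nra.
  have : 0 < u * t by nra.
  nra.
set a := b1 / z; have Ea : a * z = b1 by rewrite /a; field.
exists a, b1; split; last by split.
apply: (conv_between CA A1 A2).
have k1 : (a - a1) * z = a1 * (u - z) by nra.
have k2 : (a - a2) * z = a2 * (t - z) by nra.
clearbody a t.
have zs : 0 < z \/ z < 0 by lra.
have signs : (0 < a1 /\ 0 < a2) \/ (a1 < 0 /\ a2 < 0).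
  by case: (Rlt_le_dec 0 a1) => a1p; [left | right]; split; nra.
case: signs => [[a1p a2p]|[a1n a2n]]; case: zs => zp;
  first [left; split; nra | right; split; nra].
Qed.

Definition regular (I : interval) : Prop := 0 < fst I \/ snd I < 0.

Section StrictStep.
Variables (B W : iset) (L H : R).
Hypothesis W_full : forall t, L <= t <= H -> W t.

(** The diagonal interval [I] cannot contain 0: otherwise one of the
    endpoints [L], [H] would be a solution lying in the image. *)
Lemma strict_step_regular (I : interval) :
  iwf I -> (exists g, gam (ival I) B W g) ->
  (forall g, gam (ival I) B W g -> L < g < H) -> regular I.
Proof.
move=> wfI [g0 [[s0 [Ws0 [al [be [Ial [Bbe E]]]]]] _]] inside.
case: (Rlt_le_dec 0 (fst I)) => [|lo_np]; first by left.
case: (Rlt_le_dec (snd I) 0) => [|hi_nn]; first by right.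
have s0_in : L < s0 < H by apply: inside; apply: (gam_in al be).
exfalso; move: Ial; rewrite /ival => Ial.
case: (Req_dec be 0) => [be0|be_n0].
  (* 0 is an admissible coefficient, so H itself solves 0 * H = 0 *)
  have := inside H (gam_in 0 be (W_full _ _) _ Bbe _).
  rewrite /ival; move=> /(_ ltac:(lra) ltac:(lra) ltac:(lra)); lra.
case: (Rlt_le_dec 0 s0) => s0p.
- set a := al * s0 / H; have Ea : a * H = al * s0 by rewrite /a; field; lra.
  have := inside H (gam_in a be (W_full _ _) _ Bbe _).
  rewrite /ival; move=> /(_ ltac:(lra) ltac:(split; nra) ltac:(lra)); lra.
- have s0n : s0 < 0 by case: (Req_dec s0 0) => s00; [subst; nra | lra].
  set a := al * s0 / L; have Ea : a * L = al * s0 by rewrite /a; field; lra.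
  have := inside L (gam_in a be (W_full _ _) _ Bbe _).
  rewrite /ival; move=> /(_ ltac:(lra) ltac:(split; nra) ltac:(lra)); lra.
Qed.

(** With a regular diagonal, every solution (not only those in [W]) lies in
    [(L, H)]: by convexity, a solution outside would give a solution at [L]
    or [H]. *)
Lemma strict_step_sol (A : iset) :
  conv A -> conv B -> (forall a1 a2, A a1 -> A a2 -> 0 < a1 * a2) ->
  (exists g, gam A B W g) -> (forall g, gam A B W g -> L < g < H) ->
  forall t, sol A B t -> L < t < H.
Proof.
move=> CA CB same_sign [g0 [[s0 [Ws0 sol_s0]] _]] inside t sol_t.
have s0_in : L < s0 < H by apply: inside; apply: hull_in.
have Csol := conv_sol CA CB same_sign.
split.
- case: (Rlt_le_dec L t) => // tL.
  have solL : sol A B L by apply: (Csol t s0) => //; lra.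
  have : L < L < H by apply: inside; apply: hull_in; split=> //; apply: W_full; lra.
  lra.
- case: (Rlt_le_dec t H) => // Ht.
  have solH : sol A B H by apply: (Csol s0 t) => //; lra.
  have : L < H < H by apply: inside; apply: hull_in; split=> //; apply: W_full; lra.
  lra.
Qed.
End StrictStep.

(** * Comparison matrices with a positive dominance vector *)

Lemma uniform_factor {n : nat} {c d : 'I_n -> R} :
  (forall i, 0 <= c i) -> (forall i, 0 < d i) ->
  exists delta, 0 < delta <= 1 /\ forall i, delta * c i < d i.
Proof.
move=> c0 d0.
suff /(_ (enum 'I_n)) [delta [delta01 Hl]] : forall l : seq 'I_n,
    exists delta, 0 < delta <= 1 /\ forall i, i \in l -> delta * c i < d i.
  by exists delta; split=> // i; apply: Hl; rewrite mem_enum.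
elim=> [|j l [delta [delta01 Hl]]]; first by exists 1; split; [lra|].
have r_pos : 0 < d j / (c j + 1) by apply: Rdiv_lt_0_compat; [apply: d0 | have := c0 j; lra].
have m_pos : 0 < Rmin delta (d j / (c j + 1)) by apply: Rmin_glb_lt; lra.
exists (Rmin delta (d j / (c j + 1))); split.
  by split=> //; apply: Rle_trans (Rmin_l _ _) _; lra.
move=> i; rewrite in_cons => /orP [/eqP ->|il].
- have := c0 j; have := d0 j; have := Rmin_r delta (d j / (c j + 1)) => mr cj dj.
  have E : d j / (c j + 1) * (c j + 1) = d j by field; lra.
  nra.
- have := Hl i il; have := c0 i; have := Rmin_l delta (d j / (c j + 1)); nra.
Qed.

Lemma finite_upper_bound {n : nat} (c : 'I_n -> R) :
  exists B, 0 <= B /\ forall i, c i <= B.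
Proof.
suff /(_ (enum 'I_n)) [B [B0 Hl]] : forall l : seq 'I_n, exists B, 0 <= B /\ forall i, i \in l -> c i <= B.
  by exists B; split=> // i; apply: Hl; rewrite mem_enum.
elim=> [|j l [B [B0 Hl]]]; first by exists 0; split; [lra|].
exists (Rmax B (c j)); split; first exact: Rle_trans B0 (Rmax_l _ _).
move=> i; rewrite in_cons => /orP [/eqP ->|il]; first exact: Rmax_r.
exact: Rle_trans (Hl i il) (Rmax_l _ _).
Qed.

Lemma pow_le_decr (delta : R) (a b : nat) :
  0 < delta <= 1 -> (a <= b)%coq_nat -> delta ^ b <= delta ^ a.
Proof.
move=> delta01 ab; have -> : b = (a + Nat.sub b a)%coq_nat by lia.
rewrite pow_add; have := pow_le delta a ltac:(lra).
have : delta ^ Nat.sub b a <= 1 by rewrite -(pow1 (Nat.sub b a)); apply: pow_incr; lra.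
nra.
Qed.

(** The vector is [v = D + eps (W - D)] with [eps i = delta ^ (n - i)]
    decreasing geometrically with the row index. *)
Lemma comparison_dominance {n : nat} (m : 'I_n -> R) (M : 'I_n -> 'I_n -> R)
    (D W : 'I_n -> R) :
  (forall i, 0 < m i) -> (forall i j, 0 <= M i j) -> (forall i, 0 <= D i < W i) ->
  (forall i, m i * D i = rsum (idx_lt i) (fun j => M i j * D j)
                        + rsum (idx_gt i) (fun j => M i j * W j)) ->
  exists (v : 'I_n -> R) (gamma : R), 0 < gamma /\ (forall i, 0 < v i) /\
    forall i, gamma * v i <= m i * v i - rsum (idx_lt i) (fun j => M i j * v j)
                                       - rsum (idx_gt i) (fun j => M i j * v j).
Proof.
move=> m_pos M_nn DW balance.
pose c i := rsum (idx_lt i) (fun j => M i j * (W j - D j)).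
pose d i := m i * (W i - D i).
have c_nn : forall i, 0 <= c i.
  by move=> i; apply: rsum_nonneg => j _; have := M_nn i j; have := DW j; nra.
have d_pos : forall i, 0 < d i by move=> i; have := m_pos i; have := DW i; rewrite /d; nra.
have [delta [delta01 delta_c]] := uniform_factor c_nn d_pos.
pose eps (i : 'I_n) := delta ^ Nat.sub n i.
have eps_pos : forall i, 0 < eps i by move=> i; apply: pow_lt; lra.
have eps_le1 : forall i, eps i <= 1.
  by move=> i; rewrite -(pow_O delta); apply: pow_le_decr => //; lia.
have eps_lower : forall i j, j \in idx_lt i -> eps j <= delta * eps i.
  move=> i j /mem_idx_lt ji; have := ltP (ltn_ord i) => i_n.
  by rewrite /eps tech_pow_Rmult; apply: pow_le_decr => //; lia.
pose v i := D i + eps i * (W i - D i).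
have v_pos : forall i, 0 < v i by move=> i; have := DW i; have := eps_pos i; rewrite /v; nra.
pose slack i := eps i * (d i - delta * c i).
have slack_pos : forall i, 0 < slack i.
  by move=> i; have := delta_c i; have := eps_pos i; rewrite /slack; nra.
have v_nn : forall i, 0 <= v i by move=> i; exact/Rlt_le/v_pos.
have [gamma [gamma01 gamma_slack]] := uniform_factor v_nn slack_pos.
exists v, gamma; split; first by case: gamma01.
split; first exact: v_pos.
move=> i.
have lower : rsum (idx_lt i) (fun j => M i j * v j)
             <= rsum (idx_lt i) (fun j => M i j * D j) + eps i * (delta * c i).
  rewrite /c -2!rsum_scal -rsum_plus; apply: rsum_le => j ji.
  have Mw : 0 <= M i j * (W j - D j) by have := M_nn i j; have := DW j; nra.
  have := Rmult_le_compat_r _ _ _ Mw (eps_lower i j ji); rewrite /v; nra.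
have upper : rsum (idx_gt i) (fun j => M i j * v j) <= rsum (idx_gt i) (fun j => M i j * W j).
  apply: rsum_le => j _; apply: Rmult_le_compat_l; first exact: M_nn.
  have := eps_le1 j; have := DW j; rewrite /v; nra.
have Ev : m i * v i = m i * D i + eps i * d i by rewrite /v /d; ring.
have := gamma_slack i; have := balance i; rewrite /slack; lra.
Qed.

(** * Contractions of a box in a weighted maximum norm *)

Lemma limit_in_interval {u : nat -> R} {l lo hi : R} (k : nat) :
  Un_cv u l -> (forall m, (k <= m)%coq_nat -> lo <= u m <= hi) -> lo <= l <= hi.
Proof.
move=> ul inside; split; apply: Rnot_lt_le => out.
- have [N HN] := ul (lo - l) ltac:(lra).
  have := HN (N + k)%coq_nat ltac:(lia); have := inside (N + k)%coq_nat ltac:(lia).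
  rewrite /Rdist => ? ?; split_Rabs; lra.
- have [N HN] := ul (l - hi) ltac:(lra).
  have := HN (N + k)%coq_nat ltac:(lia); have := inside (N + k)%coq_nat ltac:(lia).
  rewrite /Rdist => ? ?; split_Rabs; lra.
Qed.

Lemma geometric_vanish {q C z : R} :
  0 <= q < 1 -> 0 <= z -> (forall k, z <= C * q ^ k) -> z = 0.
Proof.
move=> q01 z0 bound; apply: Rle_antisym => //; apply: Rnot_lt_le => z_pos.
have C_pos : 0 < C by have := bound O; rewrite pow_O; lra.
have [N HN] := pow_lt_1_zero q ltac:(rewrite Rabs_pos_eq; lra) (z / C)
                 (Rdiv_lt_0_compat _ _ z_pos C_pos).
have := HN N (le_n _); rewrite Rabs_pos_eq; last by apply: pow_le; lra.
move=> small; have := Rmult_lt_compat_l _ _ _ C_pos small.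
have -> : C * (z / C) = z by field; lra.
have := bound N; lra.
Qed.

Lemma geometric_tails (u : nat -> R) {A q : R} :
  0 <= q < 1 -> 0 <= A -> (forall k, Rabs (u (S k) - u k) <= A * q ^ k) ->
  forall k m, Rabs (u (k + m)%coq_nat - u k) <= A / (1 - q) * q ^ k.
Proof.
move=> q01 A0 step k.
have Aq0 : 0 <= A / (1 - q) by apply: Rmult_le_pos => //; apply/Rlt_le/Rinv_0_lt_compat; lra.
suff strong : forall m, Rabs (u (k + m)%coq_nat - u k) <= A / (1 - q) * (q ^ k - q ^ (k + m)%coq_nat).
  move=> m; have := strong m; have := pow_le q (k + m)%coq_nat ltac:(lra); nra.
elim=> [|m IH]; first by rewrite Nat.add_0_r !Rminus_diag Rabs_R0 Rmult_0_r; lra.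
rewrite Nat.add_succ_r; have := step (k + m)%coq_nat.
have := Rabs_triang (u (S (k + m)%coq_nat) - u (k + m)%coq_nat) (u (k + m)%coq_nat - u k).
have -> : u (S (k + m)%coq_nat) - u (k + m)%coq_nat + (u (k + m)%coq_nat - u k)
          = u (S (k + m)%coq_nat) - u k by ring.
have -> : A / (1 - q) * (q ^ k - q ^ S (k + m)%coq_nat)
          = A * q ^ (k + m)%coq_nat + A / (1 - q) * (q ^ k - q ^ (k + m)%coq_nat).
  by rewrite /=; field; lra.
lra.
Qed.

Lemma geometric_limit (u : nat -> R) (lo hi C q : R) :
  0 <= q < 1 -> (forall k, lo <= u k <= hi) ->
  (forall k m, Rabs (u (k + m)%coq_nat - u k) <= C * q ^ k) ->
  {l : R | lo <= l <= hi /\ forall k, Rabs (l - u k) <= C * q ^ k}.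
Proof.
move=> q01 inside tails.
have C0 : 0 <= C by have := tails O O; rewrite Nat.add_0_r Rminus_diag Rabs_R0 pow_O; lra.
have near : forall k a, (k <= a)%coq_nat -> Rabs (u a - u k) <= C * q ^ k.
  by move=> k a ka; have := tails k (Nat.sub a k); have -> : (k + Nat.sub a k)%coq_nat = a by lia.
have cauchy : Cauchy_crit u.
  move=> eps eps_pos.
  have [N HN] := pow_lt_1_zero q ltac:(rewrite Rabs_pos_eq; lra) (eps / (2 * C + 1))
                   ltac:(apply: Rdiv_lt_0_compat; lra).
  exists N => a b aN bN; rewrite /Rdist.
  have := HN N (le_n _); rewrite Rabs_pos_eq; last by apply: pow_le; lra.
  move=> qN; have := near N a aN; have := near N b bN.
  have : C * q ^ N <= C * (eps / (2 * C + 1)) by apply: Rmult_le_compat_l; lra.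
  have : C * (eps / (2 * C + 1)) * 2 < eps.
    apply: (Rmult_lt_reg_r (2 * C + 1)); first lra.
    field_simplify; lra.
  move=> ? ? ? ?; split_Rabs; lra.
have [l ul] := R_complete u cauchy.
exists l; split; first exact: (limit_in_interval O ul (fun m _ => inside m)).
move=> k; have := limit_in_interval k ul
  (lo := u k - C * q ^ k) (hi := u k + C * q ^ k)
  (fun m km => ltac:(have := near k m km; split_Rabs; lra)).
move=> ?; split_Rabs; lra.
Qed.

Definition wclose {n : nat} (v : vec n) (rho : R) (x y : vec n) : Prop :=
  forall j, Rabs (x j - y j) <= rho * v j.

Lemma wclose_some {n : nat} (v x y : vec n) :
  (forall j, 0 < v j) -> exists rho, 0 <= rho /\ wclose v rho x y.
Proof.
move=> v_pos; have [rho [rho0 bound]] := finite_upper_bound (fun j => Rabs (x j - y j) / v j).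
exists rho; split=> // j; have := bound j; have := v_pos j => vj bj.
have -> : Rabs (x j - y j) = Rabs (x j - y j) / v j * v j by field; lra.
by apply: Rmult_le_compat_r; lra.
Qed.

Lemma wclose_geometric_eq {n : nat} {v x y : vec n} {C q : R} :
  0 <= q < 1 -> (forall k, wclose v (C * q ^ k) x y) -> x = y.
Proof.
move=> q01 close; apply: functional_extensionality => j.
have : Rabs (x j - y j) = 0.
  apply: (geometric_vanish (C := C * v j) q01 (Rabs_pos _)) => k.
  by have := close k j; rewrite (Rmult_comm (C * v j)) -Rmult_assoc (Rmult_comm _ C).
by case: (Req_dec (x j - y j) 0) => [|/Rabs_no_R0]; lra.
Qed.

Section Contraction.
Variables (n : nat) (B : 'I_n -> interval) (T : vec n -> vec n) (v : vec n) (q : R).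
Hypotheses (v_pos : forall j, 0 < v j) (q01 : 0 <= q < 1)
  (T_box : forall x, in_box B x -> in_box B (T x))
  (T_contract : forall x y rho, in_box B x -> in_box B y -> 0 <= rho ->
     wclose v rho x y -> wclose v (q * rho) (T x) (T y)).

Lemma contract_iter {x y : vec n} {rho : R} :
  in_box B x -> in_box B y -> 0 <= rho -> wclose v rho x y ->
  forall k, wclose v (rho * q ^ k) (Nat.iter k T x) (Nat.iter k T y).
Proof.
move=> Bx By rho0 close; have iter_box : forall z k, in_box B z -> in_box B (Nat.iter k T z).
  by move=> z; elim=> [|k IH] //= Bz; apply/T_box/IH.
elim=> [|k IH]; first by move=> j; rewrite /= Rmult_1_r; apply: close.
have := T_contract _ _ _ (iter_box _ k Bx) (iter_box _ k By) _ IH.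
have -> : q * (rho * q ^ k) = rho * q ^ S k by rewrite /=; ring.
by apply; apply: Rmult_le_pos => //; apply: pow_le; lra.
Qed.

Theorem box_fixed_point (x0 : vec n) : in_box B x0 ->
  exists! x, in_box B x /\ T x = x.
Proof.
move=> Bx0.
pose xs k := Nat.iter k T x0.
have xs_box : forall k, in_box B (xs k) by elim=> [|k IH] //=; apply: T_box.
have [rho [rho0 first_step]] := wclose_some v (xs 1%nat) x0 v_pos.
have steps : forall k, wclose v (rho * q ^ k) (xs (S k)) (xs k).
  move=> k; have := contract_iter (T_box _ Bx0) Bx0 rho0 first_step k.
  by rewrite Nat.iter_swap.
pose C := rho / (1 - q).
have C0 : 0 <= C by apply: Rmult_le_pos => //; apply/Rlt_le/Rinv_0_lt_compat; lra.
have tails : forall k m j, Rabs (xs (k + m)%coq_nat j - xs k j) <= C * v j * q ^ k.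
  move=> k m j; have v0 := Rlt_le _ _ (v_pos j).
  have := geometric_tails (fun k => xs k j) q01 (Rmult_le_pos _ _ rho0 v0)
            (fun k => ltac:(have := steps k j; lra)) k m.
  by rewrite /C /Rdiv; lra.
pose limits j := geometric_limit (fun k => xs k j) (fst (B j)) (snd (B j)) (C * v j) q
                   q01 (fun k => xs_box k j) (fun k m => tails k m j).
pose lim j := proj1_sig (limits j).
have lim_box : in_box B lim by move=> j; case: (proj2_sig (limits j)).
have lim_close : forall k, wclose v (C * q ^ k) lim (xs k).
  by move=> k j; case: (proj2_sig (limits j)) => _ /(_ k); rewrite -/(lim j); lra.
have Cq0 : forall k, 0 <= C * q ^ k by move=> k; apply: Rmult_le_pos => //; apply: pow_le; lra.
have lim_fixed : T lim = lim.
  apply: (wclose_geometric_eq (v := v) (C := 2 * C * q) q01) => k j.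
  have near_T := T_contract _ _ _ lim_box (xs_box k) (Cq0 k) (lim_close k) j.
  have near_lim := lim_close (S k) j; rewrite /= -/(xs k) in near_lim.
  have := Rabs_triang (T lim j - T (xs k) j) (T (xs k) j - lim j).
  have -> : T lim j - T (xs k) j + (T (xs k) j - lim j) = T lim j - lim j by ring.
  rewrite (Rabs_minus_sym (T (xs k) j)); lra.
exists lim; split=> // y [By Ty].
have [r [r0 close]] := wclose_some v lim y v_pos.
have iter_fixed : forall z k, T z = z -> Nat.iter k T z = z.
  by move=> z; elim=> [|k IH] //= Tz; rewrite IH.
apply: (wclose_geometric_eq (v := v) (C := r) q01) => k.
by have := contract_iter lim_box By r0 close k; rewrite !iter_fixed.
Qed.
End Contraction.

Definition clip (lo hi y : R) : R := Rmax lo (Rmin hi y).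

Lemma clip_in (lo hi y : R) : lo <= hi -> lo <= clip lo hi y <= hi.
Proof. rewrite /clip /Rmax /Rmin; repeat case: Rle_dec; lra. Qed.

Lemma clip_id (lo hi y : R) : lo <= y <= hi -> clip lo hi y = y.
Proof. rewrite /clip /Rmax /Rmin; repeat case: Rle_dec; lra. Qed.

Lemma clip_lipschitz (lo hi y z : R) : Rabs (clip lo hi y - clip lo hi z) <= Rabs (y - z).
Proof. rewrite /clip /Rmax /Rmin; repeat case: Rle_dec; move=> *; split_Rabs; lra. Qed.

Lemma clip_fixed (lo hi y s : R) : lo <= hi -> clip lo hi (y - s) = y ->
  s = 0 \/ (y = hi /\ s < 0) \/ (y = lo /\ 0 < s).
Proof. rewrite /clip /Rmax /Rmin; repeat case: Rle_dec; lra. Qed.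

Definition mag (I : interval) : R := Rmax (Rabs (fst I)) (Rabs (snd I)).
Definition outer_end (I : interval) : R :=
  if Rle_dec (Rabs (fst I)) (Rabs (snd I)) then snd I else fst I.

Lemma outer_end_in (I : interval) : iwf I -> ival I (outer_end I).
Proof. rewrite /outer_end /ival /iwf => wf; case: Rle_dec => /= _; lra. Qed.

Lemma Rabs_outer_end (I : interval) : Rabs (outer_end I) = mag I.
Proof. by rewrite /outer_end /mag /Rmax; case: Rle_dec. Qed.

Lemma mag_bound {I : interval} {a : R} : ival I a -> Rabs a <= mag I.
Proof. rewrite /mag /ival /Rmax => ?; case: Rle_dec => ?; split_Rabs; lra. Qed.

Lemma mag_nonneg (I : interval) : 0 <= mag I.
Proof. exact: Rle_trans (Rabs_pos _) (Rmax_l _ _). Qed.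

Definition sgn (I : interval) : R := if Rlt_dec 0 (fst I) then 1 else -1.
Definition inner_end (I : interval) : R := if Rlt_dec 0 (fst I) then fst I else snd I.
Definition mig (I : interval) : R := sgn I * inner_end I.

Lemma regular_facts {I : interval} : iwf I -> regular I ->
  [/\ ival I (inner_end I), 0 < mig I, Rabs (sgn I) = 1, sgn I * sgn I = 1 &
      forall a, ival I a -> a * sgn I = Rabs a /\ mig I <= Rabs a].
Proof.
rewrite /mig /inner_end /sgn /ival /iwf /regular => wf.
case: Rlt_dec => /= lo_pos [lo_pos'|hi_neg]; try lra.
- split; [lra | lra | by rewrite Rabs_R1 | ring |].
  by move=> a Ia; rewrite !Rabs_pos_eq; lra.
- split; [lra | lra | by rewrite Rabs_Ropp Rabs_R1 | ring |].
  by move=> a Ia; rewrite !Rabs_left; lra.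
Qed.

(** * The Hansen-Sengupta operator of a map with an interval slope matrix *)

Section HansenSengupta.
Variables (n : nat) (X : 'I_n -> 'I_n -> interval) (y bx bz : 'I_n -> interval)
  (xt : vec n) (g : vec n -> vec n).
Hypotheses (wf_x : forall i, iwf (bx i)) (wf_y : forall i, iwf (y i))
  (wf_X : forall i j, iwf (X i j)).
Hypotheses (xt_box : in_box bx xt) (x_in_z : forall v, in_box bx v -> in_box bz v)
  (g_xt : in_box y (g xt)).
Hypothesis slope : forall x z, in_box bx x -> in_box bx z -> forall i,
  exists a : 'I_n -> R, (forall j, ival (X i j) (a j)) /\
    g z i - g x i = rsum (enum 'I_n) (fun j => a j * (z j - x j)).

Definition hs_A (i j : 'I_n) : iset := ival (X i j).
Definition hs_b (i : 'I_n) : iset := sopp (ival (y i)).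
Definition hs_u (i : 'I_n) : iset := sshift (ival (bx i)) (xt i).
Definition hs_w (i : 'I_n) : iset := sshift (ival (bz i)) (xt i).
Definition G : 'I_n -> iset := Gamma hs_A hs_b hs_u hs_w.
Definition rhs : 'I_n -> iset := gs_rhs hs_A hs_b hs_u G.

Lemma GE (i : 'I_n) : G i = gam (ival (X i i)) (rhs i) (hs_w i).
Proof. exact: GammaE. Qed.

Lemma HS_imageE (v : vec n) :
  HS_image X y bx bz xt v <-> forall i, exists t, G i t /\ v i = xt i + t.
Proof. by []. Qed.

Lemma rhs_in (i : 'I_n) (b0 : R) (a s t : 'I_n -> R) :
  ival (y i) (- b0) -> (forall j, j \in idx_lt i -> G j (s j)) ->
  (forall j, j \in idx_gt i -> hs_u j (t j)) -> (forall j, ival (X i j) (a j)) ->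
  rhs i (b0 - rsum (idx_lt i) (fun j => a j * s j) - rsum (idx_gt i) (fun j => a j * t j)).
Proof.
move=> yb Gs ut Xa.
exists (b0 - rsum (idx_lt i) (fun j => a j * s j)), (rsum (idx_gt i) (fun j => a j * t j)).
split; last split=> //.
- exists b0, (rsum (idx_lt i) (fun j => a j * s j)); split; first by exists (- b0); split=> //; ring.
  split=> //; apply: ssum_in => j ji; exists (a j), (s j); by split; [exact: Xa | split; [apply: Gs|]].
- apply: ssum_in => j ji; exists (a j), (t j); by split; [exact: Xa | split; [apply: ut|]].
Qed.

(** Part (1): every zero of [g] in the box lies in the Hansen-Sengupta
    image.  Row [i] of the slope relation between [xt] and the zero [x] is a
    point linear system solved by [x - xt]. *)
Lemma zero_in_image (x : vec n) :
  in_box bx x -> g x = (fun _ => 0) -> forall i, G i (x i - xt i).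
Proof.
move=> x_box gx0.
have [a a_spec] := functional_choice _ (slope _ _ xt_box x_box).
apply: (Gamma_contains _ _ _ _ (fun i => x i - xt i) a (fun i => - g xt i)).
- by move=> j; exists (x j); split; [apply: x_box|].
- by move=> j; exists (x j); split; [apply: x_in_z|].
- by move=> i j; case: (a_spec i) => Xa _; exact: Xa.
- by move=> j; exists (g xt j); split; [apply: g_xt|].
- move=> i /=; have [_] := a_spec i; rewrite (rsum_split i) gx0 /=; lra.
Qed.

Lemma image_components :
  (exists v, HS_image X y bx bz xt v) ->
  (forall v, HS_image X y bx bz xt v -> in_int_box bx v) ->
  (forall i, exists t, G i t) /\
  (forall i t, G i t -> fst (bx i) - xt i < t < snd (bx i) - xt i).
Proof.
move=> [v0 /HS_imageE img0] interior; split; first by move=> i; have [t [Gt _]] := img0 i; exists t.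
move=> i t Gt.
pose w (k : 'I_n) := if k == i then xt i + t else v0 k.
have : HS_image X y bx bz xt w.
  apply/HS_imageE => k; rewrite /w; case: eqP => [->|_]; first by exists t.
  exact: img0.
by move=> /interior /(_ i); rewrite /w eqxx; lra.
Qed.

Section StrictImage.
Hypotheses (G_ne : forall i, exists t, G i t)
  (G_inside : forall i t, G i t -> fst (bx i) - xt i < t < snd (bx i) - xt i).

Lemma hs_w_full (i : 'I_n) (t : R) :
  fst (bx i) - xt i <= t <= snd (bx i) - xt i -> hs_w i t.
Proof.
move=> t_in; exists (t + xt i); split; last ring.
pose v (k : 'I_n) := if k == i then t + xt i else xt k.
have v_box : in_box bx v.
  by move=> k; rewrite /v; case: eqP => [->|_]; [rewrite /ival; lra | apply: xt_box].
by have := x_in_z _ v_box i; rewrite /v eqxx.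
Qed.

Lemma diag_regular (i : 'I_n) : regular (X i i).
Proof.
apply: (strict_step_regular (rhs i) _ _ _ (hs_w_full i) _ (wf_X i i)).
- by have [t] := G_ne i; rewrite GE; exists t.
- by move=> t; rewrite -GE; apply: G_inside.
Qed.

Lemma conv_G (i : 'I_n) : conv (G i).
Proof. by rewrite GE; apply: conv_hull. Qed.

Lemma conv_rhs (i : 'I_n) : conv (rhs i).
Proof.
apply: conv_ssub; first apply: conv_ssub.
- exact/conv_sopp/conv_ival.
- by apply: conv_ssum => j; apply: conv_smul; [apply: conv_ival | apply: conv_G].
- by apply: conv_ssum => j; apply: conv_smul; [apply: conv_ival | apply/conv_sshift/conv_ival].
Qed.

Lemma sol_inside {i : 'I_n} {al be t : R} :
  ival (X i i) al -> rhs i be -> al * t = be ->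
  fst (bx i) - xt i < t < snd (bx i) - xt i.
Proof.
move=> Xal rhs_be E.
case: (regular_facts (wf_X i i) (diag_regular i)) => _ mig_pos _ sgn_sq sgn_abs.
have same_sign : forall a1 a2, ival (X i i) a1 -> ival (X i i) a2 -> 0 < a1 * a2.
  move=> a1 a2 X1 X2; have [E1 m1] := sgn_abs a1 X1; have [E2 m2] := sgn_abs a2 X2.
  have : 0 < (a1 * sgn (X i i)) * (a2 * sgn (X i i)) by rewrite E1 E2; nra.
  have -> : a1 * sgn (X i i) * (a2 * sgn (X i i)) = a1 * a2 * (sgn (X i i) * sgn (X i i)) by ring.
  by rewrite sgn_sq Rmult_1_r.
apply: (strict_step_sol (rhs i) _ _ _ (hs_w_full i) _ (conv_ival _) (conv_rhs i) same_sign).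
- by have [t'] := G_ne i; rewrite GE; exists t'.
- by move=> t'; rewrite -GE; apply: G_inside.
- by exists al, be.
Qed.

Definition wid (i : 'I_n) : R := snd (bx i) - fst (bx i).

Definition width_balance (D : 'I_n -> R) (i : 'I_n) : Prop :=
  mig (X i i) * D i = rsum (idx_lt i) (fun j => mag (X i j) * D j)
                      + rsum (idx_gt i) (fun j => mag (X i j) * wid j).

(** Spread of the right-hand side of row [i]: if the previous rows contain
    points [EM j], [EP j] at distance [D j], choosing the coefficients
    of largest magnitude and the extreme previous and later components with
    matching signs gives two right-hand sides whose difference is the
    right-hand side of the balance. *)
Lemma rhs_spread (i : 'I_n) (D EM EP : 'I_n -> R) :
  (forall j, j \in idx_lt i -> [/\ G j (EM j), G j (EP j) & EP j - EM j = D j]) ->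
  exists bp bm, [/\ rhs i bp, rhs i bm &
    bp - bm = rsum (idx_lt i) (fun j => mag (X i j) * D j)
              + rsum (idx_gt i) (fun j => mag (X i j) * wid j)].
Proof.
move=> prev.
pose a j := outer_end (X i j).
have Xa : forall j, ival (X i j) (a j) by move=> j; apply: outer_end_in.
have Ra : forall j, Rabs (a j) = mag (X i j) by move=> j; apply: Rabs_outer_end.
pose s j := if Rle_dec 0 (a j) then EM j else EP j.
pose s' j := if Rle_dec 0 (a j) then EP j else EM j.
pose t j := if Rle_dec 0 (a j) then fst (bx j) - xt j else snd (bx j) - xt j.
pose t' j := if Rle_dec 0 (a j) then snd (bx j) - xt j else fst (bx j) - xt j.
pose b0 := - fst (y i).
have yb0 : ival (y i) (- b0) by rewrite /b0 Ropp_involutive /ival; have := wf_y i; rewrite /iwf; lra.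
have u_lo : forall j, hs_u j (fst (bx j) - xt j).
  by move=> j; exists (fst (bx j)); split=> //; have := wf_x j; rewrite /iwf /ival; lra.
have u_hi : forall j, hs_u j (snd (bx j) - xt j).
  by move=> j; exists (snd (bx j)); split=> //; have := wf_x j; rewrite /iwf /ival; lra.
have lower : rsum (idx_lt i) (fun j => a j * s' j) - rsum (idx_lt i) (fun j => a j * s j)
             = rsum (idx_lt i) (fun j => mag (X i j) * D j).
  rewrite -rsum_minus; apply: rsum_ext => j /prev [_ _ <-]; rewrite -Ra /s /s'.
  by case: Rle_dec => ? /=; [rewrite Rabs_pos_eq // | rewrite Rabs_left; [|lra]]; ring.
have upper : rsum (idx_gt i) (fun j => a j * t' j) - rsum (idx_gt i) (fun j => a j * t j)
             = rsum (idx_gt i) (fun j => mag (X i j) * wid j).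
  rewrite -rsum_minus; apply: rsum_ext => j _; rewrite -Ra /t /t' /wid.
  by case: Rle_dec => ? /=; [rewrite Rabs_pos_eq // | rewrite Rabs_left; [|lra]]; ring.
exists (b0 - rsum (idx_lt i) (fun j => a j * s j) - rsum (idx_gt i) (fun j => a j * t j)),
       (b0 - rsum (idx_lt i) (fun j => a j * s' j) - rsum (idx_gt i) (fun j => a j * t' j)).
split; last lra.
- apply: rhs_in => // j; last by rewrite /t; case: Rle_dec.
  by move=> /prev [? ? _]; rewrite /s; case: Rle_dec.
- apply: rhs_in => // j; last by rewrite /t'; case: Rle_dec.
  by move=> /prev [? ? _]; rewrite /s'; case: Rle_dec.
Qed.

(** Row [i] of the image then contains the two solutions of row [i] for the
    diagonal coefficient of least magnitude and these two right-hand sides;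
    their distance satisfies the balance and is less than the width of
    [bx i] since the image is interior. *)
Lemma width_row (i : 'I_n) (D EM EP : 'I_n -> R) :
  (forall j, j \in idx_lt i ->
     [/\ 0 <= D j, G j (EM j), G j (EP j) & EP j - EM j = D j]) ->
  exists d em ep, [/\ 0 <= d < wid i, mig (X i i) * d =
      rsum (idx_lt i) (fun j => mag (X i j) * D j) + rsum (idx_gt i) (fun j => mag (X i j) * wid j),
      G i em, G i ep & ep - em = d].
Proof.
move=> prev.
have [bp [bm [rhs_bp rhs_bm bp_bm]]] :=
  rhs_spread i D EM EP (fun j ji => let: And4 _ G_em G_ep E := prev j ji in And3 G_em G_ep E).
set Ri := rsum (idx_lt i) _ + rsum (idx_gt i) _ in bp_bm *.
have Ri_nn : 0 <= Ri.
  apply: Rplus_le_le_0_compat; apply: rsum_nonneg => j.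
  - by move=> /prev [D0 _ _ _]; have := mag_nonneg (X i j); nra.
  - by move=> _; have := mag_nonneg (X i j); have := wf_x j; rewrite /iwf /wid; nra.
case: (regular_facts (wf_X i i) (diag_regular i)) => c_in mig_pos _ _ sgn_abs.
set c := inner_end (X i i) in c_in.
have Rc : Rabs c = mig (X i i) by rewrite -(proj1 (sgn_abs c c_in)) /mig Rmult_comm.
have c0 : c <> 0 by move=> c0; rewrite c0 Rabs_R0 in Rc; lra.
have solves : forall b, rhs i b -> fst (bx i) - xt i < b / c < snd (bx i) - xt i /\ G i (b / c).
  move=> b rhs_b; have Eb : c * (b / c) = b by field.
  have inside := sol_inside c_in rhs_b Eb.
  by split=> //; rewrite GE; apply: (gam_in c b) => //; apply: hs_w_full; lra.
have [bp_in G_bp] := solves bp rhs_bp; have [bm_in G_bm] := solves bm rhs_bm.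
exists (Rabs (bp / c - bm / c)), (Rmin (bp / c) (bm / c)), (Rmax (bp / c) (bm / c)); split.
- by split; [apply: Rabs_pos | rewrite /wid; split_Rabs; lra].
- have -> : bp / c - bm / c = Ri / c by rewrite -bp_bm; field.
  rewrite Rabs_mult Rabs_inv Rabs_pos_eq // Rc; field; lra.
- exact: Rmin_case.
- exact: Rmax_case.
- by rewrite /Rmax /Rmin; case: Rle_dec => ?; split_Rabs; lra.
Qed.

Lemma balanced_widths :
  exists D : 'I_n -> R, forall i, 0 <= D i < wid i /\ width_balance D i.
Proof.
pose upd (f : 'I_n -> R) (i0 : 'I_n) (r : R) j := if j == i0 then r else f j.
suff all_k : forall k, exists D EM EP : 'I_n -> R, forall i : 'I_n,
    (i < k)%coq_nat -> [/\ 0 <= D i < wid i, width_balance D i, G i (EM i), G i (EP i)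
                           & EP i - EM i = D i].
  have [D [EM [EP rows]]] := all_k n.
  by exists D => i; have [? ? _ _ _] := rows i (ltP (ltn_ord i)).
elim=> [|k [D [EM [EP rows]]]]; first by exists (fun=> 0), (fun=> 0), (fun=> 0) => i; lia.
case: (Nat.lt_ge_cases k n) => [kn|nk]; last first.
  by exists D, EM, EP => i ik; apply: rows; have := ltP (ltn_ord i); lia.
pose i0 : 'I_n := Ordinal (introT ltP kn).
have prev : forall j, j \in idx_lt i0 ->
    [/\ 0 <= D j, G j (EM j), G j (EP j) & EP j - EM j = D j].
  by move=> j /mem_idx_lt ji; have [[D0 _] _ ? ? ?] := rows j ji.
have [d [em [ep [d_in d_bal G_em G_ep d_E]]]] := width_row i0 D EM EP prev.
have below : forall j : 'I_n, (j < k)%coq_nat -> (j == i0) = false.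
  by move=> j jk; apply/eqP => E; rewrite E /= in jk; lia.
exists (upd D i0 d), (upd EM i0 em), (upd EP i0 ep) => i ik; rewrite /upd.
have same_lower : rsum (idx_lt i) (fun j => mag (X i j) * (if j == i0 then d else D j))
                  = rsum (idx_lt i) (fun j => mag (X i j) * D j).
  by apply: rsum_ext => j /mem_idx_lt ji; rewrite below //; lia.
rewrite /width_balance same_lower.
case: (eqVneq i i0) => [->|ni0]; first by split.
have ik' : (i < k)%coq_nat.
  suff : nat_of_ord i <> k by lia.
  by move=> E; move/eqP: ni0; apply; apply: val_inj.
exact: rows.
Qed.

Definition newton_map (K : R) (x : vec n) : vec n :=
  fun i => clip (fst (bx i)) (snd (bx i)) (x i - g x i / (sgn (X i i) * K)).

Lemma newton_map_box (K : R) (x : vec n) : in_box bx (newton_map K x).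
Proof. by move=> i; apply: clip_in; apply: wf_x. Qed.

Lemma newton_step_difference (K : R) (x z : vec n) (i : 'I_n) :
  0 < K -> in_box bx x -> in_box bx z ->
  exists a : 'I_n -> R, (forall j, ival (X i j) (a j)) /\
    x i - g x i / (sgn (X i i) * K) - (z i - g z i / (sgn (X i i) * K)) =
    (x i - z i) * (1 - Rabs (a i) / K)
    - (rsum (idx_lt i) (fun j => a j * (x j - z j))
       + rsum (idx_gt i) (fun j => a j * (x j - z j))) / (sgn (X i i) * K).
Proof.
move=> K_pos x_box z_box.
have [a [Xa slope_i]] := slope _ _ z_box x_box i.
exists a; split=> //.
case: (regular_facts (wf_X i i) (diag_regular i)) => _ _ sgn_abs1 sgn_sq sgn_abs.
have [Ea _] := sgn_abs _ (Xa i).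
have sgn0 : sgn (X i i) <> 0 by move=> s0; rewrite s0 Rabs_R0 in sgn_abs1; lra.
(* [a i / (sgn K) = Rabs (a i) / K] because [sgn * sgn = 1] *)
have a_c : Rabs (a i) / K = a i / (sgn (X i i) * K).
  rewrite -Ea -{2}(Rmult_1_r (a i)) -sgn_sq; field; split; lra.
rewrite (rsum_split i) in slope_i; rewrite a_c.
set SL := rsum (idx_lt i) _ in slope_i *; set SG := rsum (idx_gt i) _ in slope_i *.
field_simplify_eq; first by rewrite -[g x i](Rplus_minus (g z i)) slope_i; field; split; lra.
split; lra.
Qed.

(** If [K] bounds the diagonal magnitudes and [v] is a dominance vector of
    the comparison matrix with margin [gamma], the Newton-like map contracts
    [v]-weighted distances by [1 - gamma / K]: the diagonal part contracts
    by [1 - mig / K] and the off-diagonal part adds at most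
    [(mig - gamma) / K]. *)
Lemma newton_map_contract (v : vec n) (gamma K : R) :
  0 < K -> (forall i, mag (X i i) <= K) ->
  (forall i, gamma * v i <= mig (X i i) * v i - rsum (idx_lt i) (fun j => mag (X i j) * v j)
                                              - rsum (idx_gt i) (fun j => mag (X i j) * v j)) ->
  forall x z rho, in_box bx x -> in_box bx z -> 0 <= rho -> wclose v rho x z ->
    wclose v (Rmax 0 (1 - gamma / K) * rho) (newton_map K x) (newton_map K z).
Proof.
move=> K_pos K_bound dominance x z rho x_box z_box rho0 close i.
apply: Rle_trans (clip_lipschitz _ _ _ _) _.
have [a [Xa ->]] := newton_step_difference K x z i K_pos x_box z_box.
case: (regular_facts (wf_X i i) (diag_regular i)) => _ _ sgn_abs1 _ sgn_abs.
have [_ mig_a] := sgn_abs _ (Xa i).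
set r := Rabs (a i) / K.
have r_le1 : r <= 1.
  apply: (Rmult_le_reg_r K) => //; rewrite /r Rmult_1_l.
  have -> : Rabs (a i) / K * K = Rabs (a i) by field; lra.
  exact: Rle_trans (mag_bound (Xa i)) (K_bound i).
have r_ge : mig (X i i) / K <= r by apply: Rmult_le_compat_r => //; apply/Rlt_le/Rinv_0_lt_compat.
set SL := rsum (idx_lt i) _; set SG := rsum (idx_gt i) _.
pose ML := rsum (idx_lt i) (fun j => mag (X i j) * v j).
pose MG := rsum (idx_gt i) (fun j => mag (X i j) * v j).
have SL_bound : Rabs SL <= rho * ML.
  apply: Rle_trans (rsum_prod_bound (idx_lt i) a (fun j => x j - z j) _ (fun j => rho * v j)
                      (fun j => mag_bound (Xa j)) close) _.
  by rewrite /ML -rsum_scal; apply: Req_le; apply: rsum_ext => j _; ring.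
have SG_bound : Rabs SG <= rho * MG.
  apply: Rle_trans (rsum_prod_bound (idx_gt i) a (fun j => x j - z j) _ (fun j => rho * v j)
                      (fun j => mag_bound (Xa j)) close) _.
  by rewrite /MG -rsum_scal; apply: Req_le; apply: rsum_ext => j _; ring.
have Rc : Rabs (sgn (X i i) * K) = K by rewrite Rabs_mult sgn_abs1 Rabs_pos_eq; lra.
have off_bound : Rabs ((SL + SG) / (sgn (X i i) * K)) <= rho * (ML + MG) / K.
  rewrite /Rdiv Rabs_mult Rabs_inv Rc; apply: Rmult_le_compat_r; first by apply/Rlt_le/Rinv_0_lt_compat.
  by apply: Rle_trans (Rabs_triang _ _) _; lra.
have diag_bound : Rabs ((x i - z i) * (1 - r)) <= rho * v i * (1 - mig (X i i) / K).
  rewrite Rabs_mult (Rabs_pos_eq (1 - r)); last lra.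
  by apply: Rmult_le_compat; [apply: Rabs_pos | lra | apply: close | lra].
have := dominance i; rewrite -/ML -/MG => dom_i.
have : rho * (ML + MG) / K <= rho * (mig (X i i) * v i - gamma * v i) / K.
  by apply: Rmult_le_compat_r; [apply/Rlt_le/Rinv_0_lt_compat | apply: Rmult_le_compat_l]; lra.
have : rho * v i * (1 - gamma / K) <= Rmax 0 (1 - gamma / K) * rho * v i.
  have : 0 <= rho * v i by have := close i; have := Rabs_pos (x i - z i); nra.
  by have := Rmax_r 0 (1 - gamma / K); nra.
have : rho * v i * (1 - mig (X i i) / K) + rho * (mig (X i i) * v i - gamma * v i) / K
       = rho * v i * (1 - gamma / K) by field; lra.
have := Rabs_triang ((x i - z i) * (1 - r)) (- ((SL + SG) / (sgn (X i i) * K))).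
rewrite Rabs_Ropp -/(Rminus _ _); lra.
Qed.

(** If the projection were active at
    an endpoint, the solution of row [i] for the same coefficients would lie
    beyond that endpoint, contradicting [sol_inside]. *)
Lemma newton_fixed_row (K : R) (x : vec n) (i : 'I_n) :
  0 < K -> in_box bx x -> newton_map K x = x ->
  (forall j, j \in idx_lt i -> G j (x j - xt j)) -> G i (x i - xt i) /\ g x i = 0.
Proof.
move=> K_pos x_box fixed lower.
have [a [Xa slope_i]] := slope _ _ xt_box x_box i.
set beta := - g xt i - rsum (idx_lt i) (fun j => a j * (x j - xt j)) - rsum (idx_gt i) (fun j => a j * (x j - xt j)).
have rhs_beta : rhs i beta.
  apply: rhs_in => // [|j _]; first by rewrite Ropp_involutive; apply: g_xt.
  by exists (x j); split; [apply: x_box|].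
have row : a i * (x i - xt i) - g x i = beta.
  move: slope_i; rewrite (rsum_split i) /beta.
  by set SL := rsum (idx_lt i) _; set SG := rsum (idx_gt i) _; lra.
case: (regular_facts (wf_X i i) (diag_regular i)) => _ mig_pos sgn_abs1 sgn_sq sgn_abs.
have [Ea mig_a] := sgn_abs _ (Xa i).
have sgn0 : sgn (X i i) <> 0 by move=> s0; rewrite s0 Rabs_R0 in sgn_abs1; lra.
have a0 : a i <> 0 by move=> a0; rewrite a0 Rabs_R0 in mig_a; lra.
set s := g x i / (sgn (X i i) * K).
have Es : g x i = s * (sgn (X i i) * K) by rewrite /s; field; lra.
set t := beta / a i.
have Et : a i * t = beta by rewrite /t; field.
have t_in := sol_inside (Xa i) rhs_beta Et.
have key : Rabs (a i) * ((x i - xt i) - t) = s * K.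
  have r_eq : a i * ((x i - xt i) - t) = s * (sgn (X i i) * K) by rewrite -Es Rmult_minus_distr_l Et -row; ring.
  rewrite -Ea -[s * K]Rmult_1_l -sgn_sq.
  have -> : a i * sgn (X i i) * ((x i - xt i) - t) = sgn (X i i) * (a i * ((x i - xt i) - t)) by ring.
  by rewrite r_eq; ring.
have x_i := x_box i; move: x_i; rewrite /ival => x_i.
have s0 : s = 0.
  have := clip_fixed _ _ (x i) s (wf_x i); rewrite -/(newton_map K x i) fixed => /(_ erefl).
  case=> [s0 // | [[xhi s_neg] | [xlo s_pos]]]; exfalso.
  - by rewrite xhi in key; nra.
  - by rewrite xlo in key; nra.
have gx0 : g x i = 0 by rewrite Es s0; ring.
split=> //; rewrite GE; apply: (gam_in (a i) beta) => //.
- by apply: hs_w_full; lra.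
- by rewrite -row gx0; ring.
Qed.

Lemma newton_fixed_zero (K : R) (x : vec n) :
  0 < K -> in_box bx x -> newton_map K x = x ->
  g x = (fun _ => 0) /\ forall i, G i (x i - xt i).
Proof.
move=> K_pos x_box fixed.
have rows : forall k (i : 'I_n), (i < k)%coq_nat -> G i (x i - xt i) /\ g x i = 0.
  elim=> [|k IH] i ik; first lia.
  apply: (newton_fixed_row K x i K_pos x_box fixed) => j /mem_idx_lt ji.
  by apply: (proj1 (IH j _)); lia.
have all_rows := fun i => rows n i (ltP (ltn_ord i)).
split; last by move=> i; case: (all_rows i).
by apply: functional_extensionality => i; case: (all_rows i).
Qed.

Lemma zero_newton_fixed (K : R) (x : vec n) :
  in_box bx x -> g x = (fun _ => 0) -> newton_map K x = x.
Proof.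
move=> x_box gx0; apply: functional_extensionality => i.
by rewrite /newton_map gx0 /Rdiv Rmult_0_l Rminus_0_r clip_id //; apply: x_box.
Qed.

(** Part (2) for a single map: [g] has exactly one zero in the box, and it
    lies in the image.  The Newton-like map for a dominance vector of the
    comparison matrix is a contraction of the box. *)
Theorem unique_zero :
  exists x, [/\ in_box bx x, g x = (fun _ => 0), (forall i, G i (x i - xt i)) &
    forall x', in_box bx x' -> g x' = (fun _ => 0) -> x' = x].
Proof.
have [D D_spec] := balanced_widths.
have mig_pos : forall i, 0 < mig (X i i).
  by move=> i; case: (regular_facts (wf_X i i) (diag_regular i)).
have [v [gamma [gamma_pos [v_pos dominance]]]] :=
  comparison_dominance (fun i => mig (X i i)) (fun i j => mag (X i j)) D wid
    mig_pos (fun i j => mag_nonneg _) (fun i => proj1 (D_spec i)) (fun i => proj2 (D_spec i)).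
have [K0 [K0_nn K0_bound]] := finite_upper_bound (fun i => mag (X i i)).
have K_pos : 0 < K0 + 1 by lra.
have K_bound : forall i, mag (X i i) <= K0 + 1 by move=> i; have := K0_bound i; lra.
have q01 : 0 <= Rmax 0 (1 - gamma / (K0 + 1)) < 1.
  split; first exact: Rmax_l.
  by apply: Rmax_lub_lt; [lra | have := Rdiv_lt_0_compat _ _ gamma_pos K_pos; lra].
have [x [[x_box x_fixed] x_unique]] :=
  box_fixed_point _ _ _ _ _ v_pos q01 (fun x _ => newton_map_box (K0 + 1) x)
    (newton_map_contract v gamma (K0 + 1) K_pos K_bound dominance) xt xt_box.
have [gx0 x_img] := newton_fixed_zero (K0 + 1) x K_pos x_box x_fixed.
exists x; split=> // x' x'_box gx'0; symmetry; apply: x_unique.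
by split=> //; apply: zero_newton_fixed.
Qed.
End StrictImage.
End HansenSengupta.

Theorem theorem2 (p n : nat)
  (f : vec p -> vec n -> vec n)
  (J : vec p -> vec n -> 'I_n -> 'I_n -> R)
  (bx by_ bz : 'I_n -> interval) (ba : 'I_p -> interval)
  (xt : vec n) (bX : 'I_n -> 'I_n -> interval)
  (wf_x : forall i, iwf (bx i)) (wf_y : forall i, iwf (by_ i))
  (wf_z : forall i, iwf (bz i)) (wf_a : forall k, iwf (ba k))
  (wf_X : forall i j, iwf (bX i j))
  (hdiff : forall a : vec p, exists U : vec n -> Prop,
      is_open U /\ (forall x, in_box bx x -> U x) /\
      (forall x, U x -> has_jacobian (f a) (J a x) x))
  (hxt : in_box bx xt)
  (hi : forall v, in_box bx v -> in_box bz v)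
  (hii : forall a, in_box ba a -> in_box by_ (f a xt))
  (hiii : forall a x, in_box ba a -> in_box bx x ->
            forall i j, ival (bX i j) (J a x i j)) :
  (forall a x, in_box ba a -> in_box bx x -> f a x = (fun _ => 0) ->
     HS_image bX by_ bx bz xt x)
  /\
  ((exists v, HS_image bX by_ bx bz xt v) ->
   (forall v, HS_image bX by_ bx bz xt v -> in_int_box bx v) ->
   forall a, in_box ba a ->
     exists! x, HS_image bX by_ bx bz xt x /\ f a x = (fun _ => 0)).
Proof.
have slope : forall a, in_box ba a -> forall x z, in_box bx x -> in_box bx z -> forall i,
    exists s : 'I_n -> R, (forall j, ival (bX i j) (s j)) /\
      f a z i - f a x i = rsum (enum 'I_n) (fun j => s j * (z j - x j)).
  move=> a a_box; have [U [_ [box_U jac_U]]] := hdiff a.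
  apply: (slope_of_jacobian (f a) (J a) bx bX) => [q /box_U /jac_U // | q]; exact: hiii.
split.
- move=> a x a_box x_box fx0; apply/HS_imageE => i; exists (x i - xt i); split; last ring.
  exact: (zero_in_image _ _ _ _ _ _ (f a) hxt hi (hii a a_box) (slope a a_box)).
- move=> nonempty interior a a_box.
  have [G_ne G_inside] := image_components _ _ _ _ _ _ nonempty interior.
  have [x [_ fx0 x_img x_unique]] := unique_zero _ _ _ _ _ _ (f a) wf_x wf_y wf_X hxt hi
    (hii a a_box) (slope a a_box) G_ne G_inside.
  exists x; split.
  + by split=> //; apply/HS_imageE => i; exists (x i - xt i); split; [|ring].
  + move=> x' [/interior x'_int fx'0]; symmetry; apply: x_unique => // i.
    by have := x'_int i; rewrite /ival; lra.
Qed.
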